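(* For every Motzkin tree $T$ and every $m\in\mathbb{N}$, the following are equivalent: 1. there exists exactly one labeled Motzkin tree $t$ such that $\mathrm{skeleton}(t)=T$ and $t$ is $m$-open; 2. $\mathrm{ucs1\_aux}(T,m)$ holds.
   Context: Motzkin trees are the terms generated by a leaf $v$, a unary constructor $l$ and a binary constructor $a$. Labeled Motzkin trees are terms generated by $t ::= \mathrm{var}(i) \mid \mathrm{lam}(t) \mid \mathrm{app}(t,t)$ with $i\in\mathbb{N}$; they represent $\lambda$-terms in de Bruijn form. The skeleton function is defined by $\mathrm{skeleton}(\mathrm{var}(i))=v$, $\mathrm{skeleton}(\mathrm{lam}(t))=l(\mathrm{skeleton}(t))$, and $\mathrm{skeleton}(\mathrm{app}(t_1,t_2))=a(\mathrm{skeleton}(t_1),\mathrm{skeleton}(t_2))$. For $m\in\mathbb{N}$, ''$t$ is $m$-open'' is defined recursively: - $\mathrm{var}(i)$ is $m$-open iff $i<m$; - $\mathrm{lam}(t)$ is $m$-open iff $t$ is $(m+1)$-open; - $\mathrm{app}(t_1,t_2)$ is $m$-open iff both $t_1$ and $t_2$ are $m$-open. The predicate $\mathrm{ucs1\_aux}(T,m)$ holds iff, for every leaf of $T$, $m$ plus the number of unary nodes on the path from the root of $T$ to that leaf equals $1$. *)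

From Stdlib Require Import Arith.

Inductive motzkin : Type :=
| v : motzkin
| l : motzkin -> motzkin
| a : motzkin -> motzkin -> motzkin.

(* Labeled Motzkin trees (lambda terms in de Bruijn form). *)
Inductive lmotzkin : Type :=
| var : nat -> lmotzkin
| lam : lmotzkin -> lmotzkin
| app : lmotzkin -> lmotzkin -> lmotzkin.

Fixpoint skeleton (t : lmotzkin) : motzkin :=
  match t with
  | var _ => v
  | lam t' => l (skeleton t')
  | app t1 t2 => a (skeleton t1) (skeleton t2)
  end.

Fixpoint m_open (m : nat) (t : lmotzkin) : Prop :=
  match t with
  | var i => i < m
  | lam t' => m_open (S m) t'
  | app t1 t2 => m_open m t1 /\ m_open m t2
  end.

(* ucs1_aux T m : for every leaf of T, m plus the number of unary nodes
   on the path from the root to that leaf equals 1.  Written recursively: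
   descending through a unary node increments the counter. *)
Fixpoint ucs1_aux (T : motzkin) (m : nat) : Prop :=
  match T with
  | v => m = 1
  | l T' => ucs1_aux T' (S m)
  | a T1 T2 => ucs1_aux T1 m /\ ucs1_aux T2 m
  end.

(** The constraints on a labeling are local: a leaf at unary depth [d] below a
    root with [m] free indices may carry any index below [m + d],
    independently of all other leaves.  So the labeling is unique
    exactly when every leaf has precisely one choice, i.e. [m + d = 1]. *)

From Stdlib Require Import Lia.

Definition labels (T : motzkin) (m : nat) (t : lmotzkin) : Prop :=
  skeleton t = T /\ m_open m t.

Definition unique_labeling (T : motzkin) (m : nat) : Prop :=
  exists t, labels T m t /\ forall t', labels T m t' -> t' = t.

Lemma labels_var (m i : nat) : labels v m (var i) <-> i < m.
Proof. unfold labels; simpl; tauto. Qed.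

Lemma labels_lam (T : motzkin) (m : nat) (t : lmotzkin) :
  labels (l T) m (lam t) <-> labels T (S m) t.
Proof.
  unfold labels; simpl; split.
  - intros [Hs Ho]; injection Hs; auto.
  - intros [-> Ho]; auto.
Qed.

Lemma labels_app (T1 T2 : motzkin) (m : nat) (t1 t2 : lmotzkin) :
  labels (a T1 T2) m (app t1 t2) <-> labels T1 m t1 /\ labels T2 m t2.
Proof.
  unfold labels; simpl; split.
  - intros [Hs [Ho1 Ho2]]; injection Hs; auto.
  - intros [[-> Ho1] [-> Ho2]]; auto.
Qed.

Lemma unique_labeling_v (m : nat) : unique_labeling v m <-> m = 1.
Proof.
  split.
  - intros [[i| |] [[Hs Ho] Huniq]]; try discriminate.
    simpl in Ho; destruct m as [| [| m]]; [lia | reflexivity |].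
    assert (H0 : var 0 = var i) by (apply Huniq, labels_var; lia).
    assert (H1 : var 1 = var i) by (apply Huniq, labels_var; lia).
    rewrite <- H1 in H0; discriminate.
  - intros ->; exists (var 0); split; [apply labels_var; lia|].
    intros [i| |] [Hs Ho]; try discriminate.
    simpl in Ho; f_equal; lia.
Qed.

Lemma unique_labeling_l (T : motzkin) (m : nat) :
  unique_labeling (l T) m <-> unique_labeling T (S m).
Proof.
  split.
  - intros [[| t |] [Ht Huniq]]; try (destruct Ht; discriminate).
    exists t; split; [apply labels_lam, Ht|].
    intros t' Ht'.
    assert (E : lam t' = lam t) by (apply Huniq, labels_lam, Ht').
    injection E; auto.
  - intros [t [Ht Huniq]]; exists (lam t); split; [apply labels_lam, Ht|].
    intros [| t' |] Ht'; try (destruct Ht'; discriminate).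
    f_equal; apply Huniq, labels_lam, Ht'.
Qed.

Lemma unique_labeling_a (T1 T2 : motzkin) (m : nat) :
  unique_labeling (a T1 T2) m <-> unique_labeling T1 m /\ unique_labeling T2 m.
Proof.
  split.
  - intros [[| | t1 t2] [Ht Huniq]]; try (destruct Ht; discriminate).
    apply labels_app in Ht as [Ht1 Ht2]; split.
    + exists t1; split; [exact Ht1|].
      intros t1' Ht1'.
      assert (E : app t1' t2 = app t1 t2) by (apply Huniq, labels_app; auto).
      injection E; auto.
    + exists t2; split; [exact Ht2|].
      intros t2' Ht2'.
      assert (E : app t1 t2' = app t1 t2) by (apply Huniq, labels_app; auto).
      injection E; auto.
  - intros [[t1 [Ht1 Huniq1]] [t2 [Ht2 Huniq2]]].
    exists (app t1 t2); split; [apply labels_app; auto|].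
    intros [| | t1' t2'] Ht'; try (destruct Ht'; discriminate).
    apply labels_app in Ht' as [Ht1' Ht2'].
    f_equal; auto.
Qed.

Theorem mainTheorem5 (T : motzkin) (m : nat) :
  (exists t : lmotzkin,
      (skeleton t = T /\ m_open m t) /\
      (forall t' : lmotzkin, skeleton t' = T /\ m_open m t' -> t' = t))
  <-> ucs1_aux T m.
Proof.
  change (unique_labeling T m <-> ucs1_aux T m).
  revert m; induction T as [| T IH | T1 IH1 T2 IH2]; intro m; simpl.
  - apply unique_labeling_v.
  - rewrite unique_labeling_l; apply IH.
  - rewrite unique_labeling_a, IH1, IH2; reflexivity.
Qed.
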